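(* Let $U$ be a compact metric space, $X\subset\mathbb R^N$ compact, $T:U\to U$ surjective, and $g:U\times X\to X$ a continuous driven system that is SI-invertible and has the unique solution property. Let $H_2:\widehat U_T\to Y_T\subset\mathbb R^N\times\mathbb R^N$, $H_2(\overleftarrow u)=(h(r\overleftarrow u),h(\overleftarrow u))$, and for $i=1,\ldots,N$ let $\pi_i:\mathbb R^N\times\mathbb R^N\to\mathbb R^2$, $\pi_i(y,z)=(y^i,z^i)$, and $f_i:=\pi_i\circ H_2:\widehat U_T\to\mathbb R^2$. Let $\mathcal K$ be the Koopman operator of $\widehat T$, i.e. $\mathcal K f=f\circ\widehat T$. Then for each $i=1,\ldots,N$, $$\mathcal K f_i=\pi_i\circ G_T\circ H_2 .$$
   Context: An orbit of $T$ is a bi-infinite sequence $\{u_n\}$ with $u_{n+1}=Tu_n$. A solution of $g$ for an input $\{u_n\}_{n\in\mathbb Z}\subset U$ is a sequence $\{x_n\}_{n\in\mathbb Z}\subset X$ with $x_{n+1}=g(u_n,x_n)$. $g$ is SI-invertible if $g(\cdot,x)$ is injective for each $x$; $g$ has the unique solution property if each input has exactly one solution. $\overleftarrow U$ is the space of left-infinite sequences $(\ldots,u_{-2},u_{-1})$ in $U$ with the product topology; $r(\ldots,u_{-3},u_{-2},u_{-1})=(\ldots,u_{-3},u_{-2})$. Under the unique solution property, $h:\overleftarrow U\to X$ is defined by $h(\ldots,u_{-2},u_{-1})=x_0$ where $\{x_n\}$ is the unique solution for any bi-infinite input extending $(\ldots,u_{-2},u_{-1})$ (this depends only on the left-infinite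 part). The inverse-limit space is $\widehat U_T=\{(\ldots,u_{-2},u_{-1}):Tu_n=u_{n+1}\}$ with $\widehat T(\ldots,u_{-2},u_{-1})=(\ldots,u_{-2},u_{-1},Tu_{-1})$. $Y_T=\{(x_{n-1},x_n):\{x_k\}\text{ a solution of }g\text{ for some orbit of }T,\ n\in\mathbb Z\}$ and $G_T:Y_T\to Y_T$ is the map $(x_{n-1},x_n)\mapsto(x_n,x_{n+1})$ along such solutions. *)

From HB Require Import structures.
From mathcomp Require Import all_boot all_order all_algebra.
From mathcomp Require Import all_classical all_reals all_analysis.
Set Implicit Arguments. Unset Strict Implicit. Unset Printing Implicit Defensive.
Import Order.TTheory GRing.Theory Num.Theory.
Local Open Scope classical_set_scope.
Local Open Scope ring_scope.

(* Bi-infinite sequences are indexed by [int]. A left-infinite sequence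
   (..., u_{-2}, u_{-1}) is encoded as [ul : nat -> U] with [ul k = u_{-(k+1)}]. *)

Section DrivenSystems.
Variables (R : realType) (N : nat) (U : Type).
Implicit Types (T : U -> U) (g : U -> 'rV[R]_N -> 'rV[R]_N) (X : set 'rV[R]_N).

Definition is_solution g X (u : int -> U) (x : int -> 'rV[R]_N) : Prop :=
  (forall n, X (x n)) /\ (forall n, x (n + 1) = g (u n) (x n)).

Definition is_orbit T (u : int -> U) : Prop := forall n, u (n + 1) = T (u n).

Definition SI_invertible g X : Prop :=
  forall x, X x -> injective (fun u => g u x).

Definition unique_solution_property g X : Prop :=
  forall u : int -> U, exists! x, is_solution g X u x.

(* r (..., u_{-2}, u_{-1}) = (..., u_{-3}, u_{-2}) *)
Definition rshift (ul : nat -> U) : nat -> U := fun k => ul k.+1.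

Definition extend (ul : nat -> U) : int -> U :=
  fun n => match n with Posz _ => ul 0%N | Negz k => ul k end.

Definition h g X (ul : nat -> U) : 'rV[R]_N :=
  (xget (fun _ => 0) [set x | is_solution g X (extend ul) x]) 0.

Definition inv_limit T : set (nat -> U) :=
  [set ul | forall k, T (ul k.+1) = ul k].

(* \hat T (..., u_{-2}, u_{-1}) = (..., u_{-2}, u_{-1}, T u_{-1}) *)
Definition That T (ul : nat -> U) : nat -> U :=
  fun k => if k is k'.+1 then ul k' else T (ul 0%N).

Definition Y_T T g X : set ('rV[R]_N * 'rV[R]_N) :=
  [set y | exists u x (n : int), is_orbit T u /\ is_solution g X u x /\
                               y = (x (n - 1), x n)].

(* G_T : (x_{n-1}, x_n) |-> (x_n, x_{n+1}) along solutions for orbits of T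
   (chosen representative; identity outside Y_T) *)
Definition G_T T g X (y : 'rV[R]_N * 'rV[R]_N) : 'rV[R]_N * 'rV[R]_N :=
  xget y [set z | exists u x (n : int), is_orbit T u /\ is_solution g X u x /\
                  y = (x (n - 1), x n) /\ z = (x n, x (n + 1))].

Definition H2 g X (ul : nat -> U) : 'rV[R]_N * 'rV[R]_N := (h g X (rshift ul), h g X ul).

Definition proj_i (i : 'I_N) (yz : 'rV[R]_N * 'rV[R]_N) : R * R :=
  (yz.1 0 i, yz.2 0 i).

Definition f_i g X (i : 'I_N) : (nat -> U) -> R * R := proj_i i \o H2 g X.

Definition Koopman T (f : (nat -> U) -> R * R) : (nat -> U) -> R * R := f \o That T.

End DrivenSystems.

From Pilot Require Import Defs.
From HB Require Import structures.
From mathcomp Require Import all_boot all_order all_algebra.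
From mathcomp Require Import all_classical all_reals all_analysis.
From mathcomp Require Import zify.
Set Implicit Arguments. Unset Strict Implicit. Unset Printing Implicit Defensive.
Import Order.TTheory GRing.Theory Num.Theory numFieldNormedType.Exports.
Local Open Scope classical_set_scope.
Local Open Scope ring_scope.

(* The solution of an orbit [u] of [T] at time [n] depends only on the past
   [(..., u_(n-2), u_(n-1))], which is the point [past u n] of the inverse
   limit; hence [h] of the pasts at times [-1], [0], [1] reads off [x_(-1)],
   [x_0], [x_1] along one solution.  The Koopman operator shifts the past by
   one step, and [G_T] does the same to consecutive pairs: it is well defined
   on [Y_T] because SI-invertibility recovers [u_(n-1)] from
   [(x_(n-1), x_n)], and then [u_n = T u_(n-1)]. *)

Definition past (U : Type) (u : int -> U) (n : int) : nat -> U :=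
  fun k => u (n - k.+1%:Z).

Section Solutions.
Variables (R : realType) (N : nat) (U : Type).
Variables (X : set 'rV[R]_N) (g : U -> 'rV[R]_N -> 'rV[R]_N).
Hypothesis g_stable : forall u x, X x -> X (g u x).
Hypothesis usp : unique_solution_property g X.

Lemma is_solution_shift u x (n : int) : is_solution g X u x ->
  is_solution g X (fun m => u (m + n)) (fun m => x (m + n)).
Proof. by move=> [Xx Sx]; split=> // m; rewrite addrAC Sx. Qed.

Lemma is_solution_unique u x y :
  is_solution g X u x -> is_solution g X u y -> x = y.
Proof. by move=> Sx Sy; have [z [_ Uz]] := usp u; rewrite -(Uz x) // (Uz y). Qed.

(* The past of [y] is kept, and the future is generated from [y 0] by [u]. *)
Lemma is_solution_from_past u v y :
  (forall k, u (Negz k) = v (Negz k)) -> is_solution g X v y ->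
  exists2 z, is_solution g X u z & z 0 = y 0.
Proof.
move=> uv [Xy Sy].
pose z n := if n is Posz m then iteri m (fun j => g (u j)) (y 0) else y n.
exists z => //; split.
  by case=> [m|k] //=; elim: m => [|m IHm] //=; apply: g_stable.
case=> [m|[|k]].
- by have -> : Posz m + 1 = Posz m.+1 by lia.
- by rewrite uv; apply: (Sy (Negz 0)).
- have -> : Negz k.+1 + 1 = Negz k by lia.
  by rewrite uv /= -(Sy (Negz k.+1)); congr y; lia.
Qed.

Lemma h_solution ul u x :
  (forall k, u (Negz k) = ul k) -> is_solution g X u x -> h g X ul = x 0.
Proof.
move=> uul Sx.
have Sy : is_solution g X (extend ul)
             (xget (fun _ => 0) [set y | is_solution g X (extend ul) y]).
  by apply: xgetPex; have [y [Sy _]] := usp (extend ul); exists y.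
have [z Sz z0] := is_solution_from_past uul Sy.
by rewrite /h -z0 (is_solution_unique Sz Sx).
Qed.

Lemma h_past u x (n : int) : is_solution g X u x -> h g X (past u n) = x n.
Proof.
move=> /(is_solution_shift n) Sx; rewrite (h_solution _ Sx) ?add0r // => k.
by rewrite /past; congr u; lia.
Qed.

Lemma G_T_solution (T : U -> U) u x (n : int) :
  SI_invertible g X -> is_orbit T u -> is_solution g X u x ->
  G_T T g X (x (n - 1), x n) = (x n, x (n + 1)).
Proof.
move=> SI Ou [Xx Sx]; apply: xget_unique; first by exists u, x, n.
move=> _ [v [y [m [Ov [[Xy Sy] [[ym1 ym] ->]]]]]].
have v_prev : v (m - 1) = u (n - 1).
  apply: (SI _ (Xy (m - 1))) => /=.
  by rewrite -Sy -ym1 -(Sx (n - 1)) !subrK.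
have v_now : v m = u n by rewrite -(subrK 1 m) -(subrK 1 n) Ov Ou v_prev.
by rewrite Sy v_now -ym Sx.
Qed.

End Solutions.

Section InverseLimit.
Variables (U : Type) (T : U -> U) (ul : nat -> U).

Definition orbit_of_inv_limit (n : int) : U :=
  match n with Posz m => iter m.+1 T (ul 0%N) | Negz k => ul k end.

Hypothesis ul_inv : inv_limit T ul.

Lemma is_orbit_of_inv_limit : is_orbit T orbit_of_inv_limit.
Proof.
case=> [m|[|k]] //; first by have -> : Posz m + 1 = Posz m.+1 by lia.
have -> : Negz k.+1 + 1 = Negz k by lia.
by rewrite /= ul_inv.
Qed.

Lemma past_orbit_of_inv_limit_prev :
  past orbit_of_inv_limit (-1) = Defs.rshift ul.
Proof.
by apply/funext => k; rewrite /past; have -> : -1 - k.+1%:Z = Negz k.+1 by lia.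
Qed.

Lemma past_orbit_of_inv_limit_now : past orbit_of_inv_limit 0 = ul.
Proof.
by apply/funext => k; rewrite /past; have -> : 0 - k.+1%:Z = Negz k by lia.
Qed.

Lemma past_orbit_of_inv_limit_next : past orbit_of_inv_limit 1 = That T ul.
Proof.
apply/funext => -[|k]; rewrite /past; first by have -> : 1 - 1%:Z = 0 by lia.
by have -> : 1 - k.+2%:Z = Negz k by lia.
Qed.

End InverseLimit.

Theorem corollary1 (R : realType) (N : nat) (U : metricType R)
  (X : set 'rV[R]_N) (T : U -> U) (g : U -> 'rV[R]_N -> 'rV[R]_N) :
  compact [set: U] ->
  compact X ->
  (forall u x, X x -> X (g u x)) ->
  {within [set: U] `*` X, continuous (fun p : U * 'rV[R]_N => g p.1 p.2)} ->
  (forall v : U, exists u, T u = v) ->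
  SI_invertible g X ->
  unique_solution_property g X ->
  forall i : 'I_N, forall ul, inv_limit T ul ->
    Koopman T (f_i g X i) ul = (proj_i i \o G_T T g X \o H2 g X) ul.
Proof.
move=> _ _ g_stable _ _ SI usp i ul ul_inv.
have Ou := is_orbit_of_inv_limit ul_inv.
have [x [Sx _]] := usp (orbit_of_inv_limit T ul).
have hx := h_past g_stable usp _ Sx.
have h_prev : h g X (Defs.rshift ul) = x (0 - 1).
  by rewrite -(past_orbit_of_inv_limit_prev T) hx.
have h_now : h g X ul = x 0 by rewrite -{1}(past_orbit_of_inv_limit_now T ul) hx.
have h_next : h g X (That T ul) = x (0 + 1).
  by rewrite -(past_orbit_of_inv_limit_next T ul) hx.
rewrite /Koopman /f_i /H2 /comp h_prev h_next h_now.
by rewrite (G_T_solution _ SI Ou Sx).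
Qed.
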